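(* Let $n\ge1$, $p,q\in(0,1)^n$, and let $P=\operatorname{Ber}(p)$, $Q=\operatorname{Ber}(q)$ be probability measures on $\{0,1\}^n$. Then $$\sqrt{\prod_{i=1}^n\frac{1-(p_i-q_i)^2}{2}}\;\le\;\sum_{x\in\{0,1\}^n}\sqrt{P(x)Q(x)}\;\le\;\sqrt{\prod_{i=1}^n\big[1-(p_i-q_i)^2\big]}.$$
   Context: For $p=(p_1,\ldots,p_n)\in(0,1)^n$, $\operatorname{Ber}(p)$ is the product Bernoulli probability measure on $\{0,1\}^n$: $\operatorname{Ber}(p)(x)=\prod_{i=1}^n p_i^{x_i}(1-p_i)^{1-x_i}$. *)

From mathcomp Require Import all_boot all_order all_algebra.
From mathcomp Require Import reals.
Set Implicit Arguments. Unset Strict Implicit. Unset Printing Implicit Defensive.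
Import Order.TTheory GRing.Theory Num.Theory.
Local Open Scope ring_scope.

Definition Ber (R : realType) (n : nat) (p : 'I_n -> R) (x : {ffun 'I_n -> bool}) : R :=
  \prod_(i < n) (if x i then p i else 1 - p i).

From mathcomp Require Import all_boot all_order all_algebra.
From mathcomp Require Import reals.
From mathcomp Require Import ring lra.
Import Order.TTheory GRing.Theory Num.Theory.
Local Open Scope ring_scope.

(* The Bhattacharyya coefficient of two product measures factorises over the
   coordinates: summing sqrt(P(x) Q(x)) over {0,1}^n gives the product of the
   one-dimensional coefficients b_i = sqrt(p_i q_i) + sqrt((1-p_i)(1-q_i)).
   With c_i = 2 sqrt(p_i (1-p_i)) sqrt(q_i (1-q_i)), one has
   b_i^2 = p_i q_i + (1-p_i)(1-q_i) + c_i; by AM-GM c_i <= p_i(1-p_i) + q_i(1-q_i),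
   which gives b_i^2 <= 1 - (p_i-q_i)^2, and c_i >= 0 together with
   (1-p_i-q_i)^2 >= 0 gives b_i^2 >= (1 - (p_i-q_i)^2)/2.  Multiplying the
   square roots of these coordinatewise bounds yields the theorem. *)

Lemma sqrtr_prod {R : rcfType} (I : Type) (r : seq I) (P : pred I) (F : I -> R) :
  (forall i, P i -> 0 <= F i) ->
  Num.sqrt (\prod_(i <- r | P i) F i) = \prod_(i <- r | P i) Num.sqrt (F i).
Proof.
move=> F_ge0.
suff [] : \prod_(i <- r | P i) Num.sqrt (F i) = Num.sqrt (\prod_(i <- r | P i) F i)
          /\ 0 <= \prod_(i <- r | P i) F i by [].
apply: (big_ind2 (fun s x => s = Num.sqrt x /\ 0 <= x)).
- by rewrite sqrtr1.
- by move=> s1 x1 s2 x2 [-> x1_ge0] [-> x2_ge0]; rewrite sqrtrM // mulr_ge0.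
- by move=> i Pi; split; last exact: F_ge0.
Qed.

Lemma sqrtrM_le_add {R : rcfType} (x y : R) : 0 <= x -> 0 <= y ->
  Num.sqrt x * Num.sqrt y *+ 2 <= x + y.
Proof.
move=> x_ge0 y_ge0.
by rewrite -{2}(sqr_sqrtr x_ge0) -{2}(sqr_sqrtr y_ge0) leif_mean_square_scaled.
Qed.

Section BernoulliCoefficient.
Variable R : rcfType.

Definition bhattacharyya_ber (a b : R) : R :=
  Num.sqrt (a * b) + Num.sqrt ((1 - a) * (1 - b)).

Variables a b : R.
Hypotheses (a_ge0 : 0 <= a) (a_le1 : a <= 1) (b_ge0 : 0 <= b) (b_le1 : b <= 1).

Let bc := bhattacharyya_ber a b.

Lemma bhattacharyya_ber_ge0 : 0 <= bc.
Proof. by rewrite addr_ge0 ?sqrtr_ge0. Qed.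

Lemma sqr_bhattacharyya_ber :
  bc ^+ 2 = a * b + (1 - a) * (1 - b)
            + Num.sqrt (a * (1 - a)) * Num.sqrt (b * (1 - b)) *+ 2.
Proof.
have ab_ge0 : 0 <= a * b by rewrite mulr_ge0.
have ab'_ge0 : 0 <= (1 - a) * (1 - b) by rewrite mulr_ge0 ?subr_ge0.
have aa'_ge0 : 0 <= a * (1 - a) by rewrite mulr_ge0 ?subr_ge0.
rewrite sqrrD !sqr_sqrtr // -!sqrtrM //.
by rewrite addrAC; congr (_ + Num.sqrt _ *+ 2); ring.
Qed.

Lemma sqr_bhattacharyya_ber_le : bc ^+ 2 <= 1 - (a - b) ^+ 2.
Proof.
have := sqrtrM_le_add (a * (1 - a)) (b * (1 - b)).
rewrite !mulr_ge0 ?subr_ge0 // sqr_bhattacharyya_ber; nra.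
Qed.

Lemma sqr_bhattacharyya_ber_ge : (1 - (a - b) ^+ 2) / 2 <= bc ^+ 2.
Proof.
have := sqr_ge0 (1 - a - b).
have := mulr_ge0 (sqrtr_ge0 (a * (1 - a))) (sqrtr_ge0 (b * (1 - b))).
rewrite sqr_bhattacharyya_ber; nra.
Qed.

Lemma bhattacharyya_ber_le_sqrt : bc <= Num.sqrt (1 - (a - b) ^+ 2).
Proof.
rewrite -(ger0_norm bhattacharyya_ber_ge0) -sqrtr_sqr.
exact/ler_wsqrtr/sqr_bhattacharyya_ber_le.
Qed.

Lemma sqrt_le_bhattacharyya_ber : Num.sqrt ((1 - (a - b) ^+ 2) / 2) <= bc.
Proof.
rewrite -(ger0_norm bhattacharyya_ber_ge0) -sqrtr_sqr.
exact/ler_wsqrtr/sqr_bhattacharyya_ber_ge.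
Qed.

Lemma one_sub_sqr_subr_ge0 : 0 <= 1 - (a - b) ^+ 2.
Proof. exact: le_trans (sqr_ge0 bc) sqr_bhattacharyya_ber_le. Qed.

End BernoulliCoefficient.

Arguments bhattacharyya_ber {R}.
Arguments one_sub_sqr_subr_ge0 {R a b}.
Arguments sqrt_le_bhattacharyya_ber {R a b}.
Arguments bhattacharyya_ber_le_sqrt {R a b}.

Lemma sum_sqrt_Ber_mul (R : realType) (n : nat) (p q : 'I_n -> R) :
  (forall i, 0 <= p i) -> (forall i, p i <= 1) ->
  (forall i, 0 <= q i) -> (forall i, q i <= 1) ->
  \sum_(x : {ffun 'I_n -> bool}) Num.sqrt (Ber p x * Ber q x)
    = \prod_(i < n) bhattacharyya_ber (p i) (q i).
Proof.
move=> p_ge0 p_le1 q_ge0 q_le1.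
pose B i (c : bool) := (if c then p i else 1 - p i) * (if c then q i else 1 - q i).
have B_ge0 i c : 0 <= B i c by case: c; rewrite /B mulr_ge0 ?subr_ge0.
rewrite (eq_bigr (fun i => \sum_(c : bool) Num.sqrt (B i c))); last first.
  by move=> i _; rewrite big_bool.
rewrite bigA_distr_bigA; apply: eq_bigr => x _.
by rewrite /Ber -big_split sqrtr_prod => // i _; apply: B_ge0.
Qed.

Theorem lemma1 (R : realType) (n : nat) (p q : 'I_n -> R)
  (hn : (1 <= n)%N)
  (hp : forall i, 0 < p i < 1) (hq : forall i, 0 < q i < 1) :
  Num.sqrt (\prod_(i < n) ((1 - (p i - q i) ^+ 2) / 2))
    <= \sum_(x : {ffun 'I_n -> bool}) Num.sqrt (Ber p x * Ber q x)
  /\ \sum_(x : {ffun 'I_n -> bool}) Num.sqrt (Ber p x * Ber q x)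
    <= Num.sqrt (\prod_(i < n) (1 - (p i - q i) ^+ 2)).
Proof.
have p_ge0 i : 0 <= p i by case/andP: (hp i) => /ltW.
have p_le1 i : p i <= 1 by case/andP: (hp i) => _ /ltW.
have q_ge0 i : 0 <= q i by case/andP: (hq i) => /ltW.
have q_le1 i : q i <= 1 by case/andP: (hq i) => _ /ltW.
have hi_ge0 i : 0 <= 1 - (p i - q i) ^+ 2 :=
  one_sub_sqr_subr_ge0 (p_ge0 i) (p_le1 i) (q_ge0 i) (q_le1 i).
rewrite sum_sqrt_Ber_mul // !sqrtr_prod => [|i _|i _]; last 2 first.
- exact: hi_ge0.
- by rewrite divr_ge0.
split; apply: ler_prod => i _; rewrite ?sqrtr_ge0 ?bhattacharyya_ber_ge0 /=.
- exact: sqrt_le_bhattacharyya_ber (p_ge0 i) (p_le1 i) (q_ge0 i) (q_le1 i).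
- exact: bhattacharyya_ber_le_sqrt (p_ge0 i) (p_le1 i) (q_ge0 i) (q_le1 i).
Qed.
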